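(* Let $(\lambda_n)_{n\in\mathbb{N}}$ be a sequence of complex numbers with $\sum_{n=0}^{\infty}|\lambda_n|<\infty$. Let $r\in(0,1)$, $L\in\mathbb{C}$, and let $(x_n)_{n\in\mathbb{N}}$ be a complex-valued sequence such that $\lim_{N\to\infty}\mathbb{E}^{\mathrm{Bin}(r)}_{n\le N}x_n=L$. Then \[ \lim_{N\to\infty}\mathbb{E}^{\mathrm{Bin}(r)}_{n\le N}\left(\sum_{k=0}^{n}\lambda_k x_{n-k}\right)=L\cdot\sum_{n=0}^{\infty}\lambda_n . \]
   Context: $\mathbb{N}=\{0,1,2,\dots\}$. For $r\in(0,1)$, a complex sequence $(y_n)_{n\in\mathbb{N}}$ and $N\in\mathbb{N}$, the $N$-th $r$-binomial average is $\mathbb{E}^{\mathrm{Bin}(r)}_{n\le N}y_n=\sum_{n=0}^{N}\binom{N}{n}r^n(1-r)^{N-n}y_n$. In the claim, the averaged sequence is $y_n=\sum_{k=0}^{n}\lambda_k x_{n-k}$. *)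

From Stdlib Require Import Reals.
From Coquelicot Require Import Coquelicot.
Open Scope R_scope.

Definition binomC (N n : nat) : C := RtoC (Binomial.C N n).

Definition bin_avg (r : R) (y : nat -> C) (N : nat) : C :=
  sum_n (fun n => (binomC N n * RtoC (r ^ n * (1 - r) ^ (N - n)) * y n)%C) N.

Definition conv (lam x : nat -> C) (n : nat) : C :=
  sum_n (fun k => (lam k * x (n - k)%nat)%C) n.

(* Write A_N y for the N-th r-binomial average and (shift k x)_n = x_{n-k} (zero for n < k).
   By Pascal's rule, A_{N+1}(shift (k+1) x) = (1-r) A_N(shift (k+1) x) + r A_N(shift k x),
   a relaxation scheme which inherits the limit L and every uniform bound of A_N(shift k x);
   by induction on k all delayed averages tend to L and are bounded by one M.  Since
   A_N(conv lam x) = sum_{k<=N} lam_k A_N(shift k x), Tannery's theorem, dominated by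
   M |lam_k|, gives the limit L * sum_k lam_k. *)

From Stdlib Require Import Reals Lra Lia.
From Coquelicot Require Import Coquelicot.
Open Scope R_scope.

(* Coquelicot's sums live in [AbelianMonoid.sort C_AbelianMonoid], which [ring] does not recognise as [C]. *)
Ltac ring_C := match goal with |- ?a = ?b => change (@eq C a b); ring end.

Lemma sum_n_Sl {G : AbelianMonoid} (a : nat -> G) (n : nat) :
  sum_n a (S n) = plus (a O) (sum_n (fun k => a (S k)) n).
Proof. unfold sum_n. rewrite sum_n_m_S. apply sum_Sn_m. lia. Qed.

Lemma sum_n_Cmult_l (c : C) (f : nat -> C) n :
  sum_n (fun k => c * f k)%C n = (c * sum_n f n)%C.
Proof. exact (sum_n_mult_l (K := C_Ring) c f n). Qed.

Lemma sum_n_Cplus (f g : nat -> C) n :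
  sum_n (fun k => f k + g k)%C n = (sum_n f n + sum_n g n)%C.
Proof. exact (sum_n_plus f g n). Qed.

Lemma Cmod_RtoC_nonneg a : 0 <= a -> Cmod (RtoC a) = a.
Proof. intros Ha. now rewrite Cmod_R, Rabs_pos_eq. Qed.

Lemma filterlim_C_seq (u : nat -> C) (L : C) :
  filterlim u eventually (locally L) <->
  forall eps : posreal, exists N0, forall N, (N0 <= N)%nat -> Cmod (u N - L) < eps.
Proof.
  rewrite (filterlim_locally_ball_norm (K := C_AbsRing)).
  split; intros H eps; destruct (H eps) as [N0 HN0]; exists N0;
    intros N HN; specialize (HN0 N HN); unfold ball_norm in *;
    now rewrite Cmod_norm in *.
Qed.

Lemma filterlim_Cmult_l (c : C) (u : nat -> C) (L : C) :
  filterlim u eventually (locally L) ->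
  filterlim (fun N => c * u N)%C eventually (locally (c * L)%C).
Proof.
  intros Hu. eapply filterlim_comp; [exact Hu|].
  exact (filterlim_scal_r (V := C_NormedModule) c L).
Qed.

Lemma filterlim_Cplus (u v : nat -> C) (a b : C) :
  filterlim u eventually (locally a) -> filterlim v eventually (locally b) ->
  filterlim (fun N => u N + v N)%C eventually (locally (a + b)%C).
Proof.
  intros Hu Hv. eapply filterlim_comp_2; [exact Hu|exact Hv|].
  exact (filterlim_plus (V := C_NormedModule) a b).
Qed.

(* [Binomial.C N n] is not zero for [n > N], hence the explicit cut-off. *)
Definition bin_weight (r : R) (N n : nat) : R :=
  if (n <=? N)%nat then Binomial.C N n * (r ^ n * (1 - r) ^ (N - n)) else 0.

Lemma bin_avg_weight r y N M : (N <= M)%nat ->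
  bin_avg r y N = sum_n (fun n => RtoC (bin_weight r N n) * y n)%C M.
Proof.
  induction 1 as [|M HNM IH].
  - apply sum_n_ext_loc; intros n Hn. unfold bin_weight, binomC.
    destruct (Nat.leb_spec n N); [|lia]. now rewrite <- RtoC_mult.
  - rewrite sum_Sn, <- IH. unfold bin_weight.
    destruct (Nat.leb_spec (S M) N); [lia|].
    change (bin_avg r y N = bin_avg r y N + RtoC 0 * y (S M))%C.
    now rewrite Cmult_0_l, Cplus_0_r.
Qed.

Lemma bin_weight_S r N n :
  bin_weight r (S N) (S n) = (1 - r) * bin_weight r N (S n) + r * bin_weight r N n.
Proof.
  unfold bin_weight.
  destruct (Nat.leb_spec (S n) (S N)), (Nat.leb_spec (S n) N), (Nat.leb_spec n N);
    try lia.
  - rewrite <- pascal by lia.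
    replace (S N - S n)%nat with (S (N - S n)) by lia.
    replace (N - n)%nat with (S (N - S n)) by lia. simpl. ring.
  - assert (n = N) by lia; subst.
    rewrite !C_n_n, !Nat.sub_diag. simpl. ring.
  - ring.
Qed.

Definition shift (k : nat) (x : nat -> C) (n : nat) : C :=
  if (k <=? n)%nat then x (n - k)%nat else 0%C.

Lemma shift0 x n : shift 0 x n = x n.
Proof. unfold shift. simpl. now rewrite Nat.sub_0_r. Qed.

Lemma shiftS k x n : shift (S k) x n = shift 1 (shift k x) n.
Proof.
  unfold shift.
  destruct (Nat.leb_spec (S k) n), (Nat.leb_spec 1 n), (Nat.leb_spec k (n - 1));
    try lia; try reflexivity.
  f_equal. lia.
Qed.

Lemma bin_avg_ext r y z N : (forall n, y n = z n) -> bin_avg r y N = bin_avg r z N.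
Proof. intros H. apply sum_n_ext. intros n. now rewrite H. Qed.

Lemma bin_avg_shift1 r z N M : (N <= M)%nat ->
  bin_avg r (shift 1 z) N = sum_n (fun n => RtoC (bin_weight r N (S n)) * z n)%C M.
Proof.
  intros HNM. rewrite (bin_avg_weight r _ N (S M)), sum_n_Sl by lia.
  unfold shift at 1; simpl.
  rewrite Cmult_0_r. etransitivity; [apply (@plus_zero_l C_AbelianMonoid)|].
  apply sum_n_ext; intros n. unfold shift; simpl. now rewrite Nat.sub_0_r.
Qed.

(* Pascal's rule: a Bin(N+1, r) variable is a Bin(N, r) variable plus an independent coin. *)
Lemma bin_avg_shift1_S r z N :
  bin_avg r (shift 1 z) (S N)
  = (RtoC (1 - r) * bin_avg r (shift 1 z) N + RtoC r * bin_avg r z N)%C.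
Proof.
  rewrite !(bin_avg_shift1 r z _ (S N)), (bin_avg_weight r z N (S N)) by lia.
  rewrite <- !sum_n_Cmult_l, <- sum_n_Cplus.
  apply sum_n_ext; intros n.
  rewrite bin_weight_S, RtoC_plus, !RtoC_mult. ring_C.
Qed.

Section Relaxation.

Variables (r : R) (u v : nat -> C).
Hypothesis r_range : 0 < r < 1.
Hypothesis u_S : forall N, u (S N) = (RtoC (1 - r) * u N + RtoC r * v N)%C.

(* The distance of [u] to [L] contracts by [1 - r] up to the error of [v]. *)
Lemma relaxation_lim (L : C) :
  filterlim v eventually (locally L) -> filterlim u eventually (locally L).
Proof.
  rewrite !filterlim_C_seq. intros Hv eps.
  destruct (Hv (pos_div_2 eps)) as [N0 HN0]. simpl in HN0.
  set (D := Cmod (u N0 - L)).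
  assert (Hj : forall j, Cmod (u (N0 + j)%nat - L) <= (1 - r) ^ j * D + eps / 2).
  { induction j as [|j IH].
    - rewrite Nat.add_0_r. simpl. pose proof (cond_pos eps). unfold D. lra.
    - rewrite Nat.add_succ_r, u_S.
      replace (RtoC (1 - r) * u (N0 + j)%nat + RtoC r * v (N0 + j)%nat - L)%C
        with (RtoC (1 - r) * (u (N0 + j)%nat - L) + RtoC r * (v (N0 + j)%nat - L))%C
        by (rewrite RtoC_minus; ring_C).
      eapply Rle_trans; [apply Cmod_triangle|].
      rewrite !Cmod_mult, !Cmod_RtoC_nonneg by lra.
      assert (Cmod (v (N0 + j)%nat - L) < eps / 2) by (apply HN0; lia).
      simpl. nra. }
  assert (Hgeom : is_lim_seq (fun j => (1 - r) ^ j * D) 0).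
  { replace 0 with (0 * D) by ring. apply is_lim_seq_mult'; [|apply is_lim_seq_const].
    apply is_lim_seq_geom. rewrite Rabs_pos_eq; lra. }
  apply is_lim_seq_spec in Hgeom. destruct (Hgeom (pos_div_2 eps)) as [j0 Hj0].
  exists (N0 + j0)%nat. intros N HN.
  replace N with (N0 + (N - N0))%nat by lia.
  eapply Rle_lt_trans; [apply Hj|].
  specialize (Hj0 (N - N0)%nat ltac:(lia)). simpl in Hj0.
  rewrite Rminus_0_r in Hj0. apply Rabs_def2 in Hj0. lra.
Qed.

Lemma relaxation_bound (M : R) :
  (forall N, Cmod (v N) <= M) -> Cmod (u 0%nat) <= M -> forall N, Cmod (u N) <= M.
Proof.
  intros Hv Hu0. induction N as [|N IH]; [exact Hu0|].
  rewrite u_S. eapply Rle_trans; [apply Cmod_triangle|].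
  rewrite !Cmod_mult, !Cmod_RtoC_nonneg by lra.
  specialize (Hv N). nra.
Qed.

End Relaxation.

Lemma bin_avg_shift_lim r x L : 0 < r < 1 ->
  filterlim (bin_avg r x) eventually (locally L) ->
  forall k, filterlim (bin_avg r (shift k x)) eventually (locally L).
Proof.
  intros Hr Hx. induction k as [|k IH].
  - apply (filterlim_ext (bin_avg r x)); [|exact Hx].
    intros N. apply bin_avg_ext. intros n. now rewrite shift0.
  - apply (filterlim_ext (bin_avg r (shift 1 (shift k x)))).
    + intros N. apply bin_avg_ext. intros n. symmetry. apply shiftS.
    + apply (relaxation_lim r _ (bin_avg r (shift k x))); [exact Hr| |exact IH].
      intros N. apply bin_avg_shift1_S.
Qed.

Lemma bin_avg_shift_bound r x M : 0 < r < 1 ->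
  (forall N, Cmod (bin_avg r x N) <= M) ->
  forall k N, Cmod (bin_avg r (shift k x) N) <= M.
Proof.
  intros Hr Hx. assert (HM : 0 <= M) by (eapply Rle_trans; [apply Cmod_ge_0|apply (Hx O)]).
  induction k as [|k IH]; intros N.
  - erewrite bin_avg_ext; [apply Hx|]. intros n. now rewrite shift0.
  - erewrite bin_avg_ext; [|intros n; apply shiftS].
    apply (relaxation_bound r _ (bin_avg r (shift k x))); [exact Hr| |exact IH|].
    + intros N'. apply bin_avg_shift1_S.
    + unfold bin_avg. rewrite sum_O. unfold shift. simpl.
      now rewrite Cmult_0_r, Cmod_0.
Qed.

Lemma conv_shift lam x n M : (n <= M)%nat ->
  conv lam x n = sum_n (fun k => lam k * shift k x n)%C M.
Proof.
  induction 1 as [|M HnM IH].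
  - apply sum_n_ext_loc. intros k Hk. unfold shift.
    destruct (Nat.leb_spec k n); [reflexivity|lia].
  - rewrite sum_Sn, <- IH. unfold shift.
    destruct (Nat.leb_spec (S M) n); [lia|].
    rewrite Cmult_0_r. symmetry. apply (@plus_zero_r C_AbelianMonoid).
Qed.

Lemma bin_avg_conv r lam x N :
  bin_avg r (conv lam x) N = sum_n (fun k => lam k * bin_avg r (shift k x) N)%C N.
Proof.
  unfold bin_avg at 1.
  rewrite (sum_n_ext_loc _ (fun n => sum_n (fun k =>
    binomC N n * RtoC (r ^ n * (1 - r) ^ (N - n)) * (lam k * shift k x n))%C N)).
  - rewrite sum_n_switch. apply sum_n_ext. intros k.
    unfold bin_avg. rewrite <- sum_n_Cmult_l.
    apply sum_n_ext. intros n. ring_C.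
  - intros n Hn. rewrite (conv_shift lam x n N Hn), sum_n_Cmult_l. reflexivity.
Qed.

Lemma filterlim_sum_n_Cmult (lam : nat -> C) (U : nat -> nat -> C) (L : C) (K : nat) :
  (forall k, filterlim (U k) eventually (locally L)) ->
  filterlim (fun N => sum_n (fun k => lam k * U k N)%C K) eventually
    (locally (L * sum_n lam K)%C).
Proof.
  intros HU. induction K as [|K IH].
  - rewrite sum_O. replace (L * lam O)%C with (lam O * L)%C by ring_C.
    apply (filterlim_ext (fun N => lam O * U O N)%C).
    + intros N. now rewrite sum_O.
    + now apply filterlim_Cmult_l.
  - rewrite sum_Sn. change (plus ?a ?b) with (a + b)%C.
    replace (L * (sum_n lam K + lam (S K)))%C
      with (L * sum_n lam K + lam (S K) * L)%C by ring_C.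
    apply (filterlim_ext (fun N => sum_n (fun k => lam k * U k N)%C K + lam (S K) * U (S K) N)%C).
    + intros N. now rewrite sum_Sn.
    + apply filterlim_Cplus; [exact IH|now apply filterlim_Cmult_l].
Qed.

Lemma Cmod_sum_n_m_Cmult_le (lam u : nat -> C) (M : R) (n m : nat) :
  (forall k, Cmod (u k) <= M) ->
  Cmod (sum_n_m (fun k => lam k * u k)%C n m) <= M * sum_n_m (fun k => Cmod (lam k)) n m.
Proof.
  intros Hu. rewrite Cmod_norm.
  eapply Rle_trans; [apply (norm_sum_n_m (K := R_AbsRing) (V := C_R_NormedModule))|].
  rewrite <- (sum_n_m_mult_l (K := R_Ring)).
  apply sum_n_m_le. intros k. rewrite <- Cmod_norm, Cmod_mult.
  pose proof (Cmod_ge_0 (lam k)). specialize (Hu k).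
  change (mult M (Cmod (lam k))) with (M * Cmod (lam k)). nra.
Qed.

Lemma Cmod_sum_n_Cmult_sub_le (lam U : nat -> C) (L s : C) (M : R) (K N : nat) :
  (K <= N)%nat -> (forall k, Cmod (U k) <= M) ->
  Cmod (sum_n (fun k => lam k * U k)%C N - L * s)
  <= Cmod (sum_n (fun k => lam k * U k)%C K - L * sum_n lam K)
     + M * sum_n_m (fun k => Cmod (lam k)) (S K) N + Cmod L * Cmod (sum_n lam K - s).
Proof.
  intros HKN HU. set (F := fun k => (lam k * U k)%C).
  assert (Hsplit : sum_n F N = (sum_n F K + sum_n_m F (S K) N)%C)
    by exact (sum_n_m_Chasles F 0 K N ltac:(lia) ltac:(lia)).
  rewrite Hsplit.
  replace (sum_n F K + sum_n_m F (S K) N - L * s)%C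
    with ((sum_n F K - L * sum_n lam K) + sum_n_m F (S K) N + L * (sum_n lam K - s))%C
    by ring_C.
  eapply Rle_trans; [apply Cmod_triangle|]. rewrite Cmod_mult.
  apply Rplus_le_compat_r. eapply Rle_trans; [apply Cmod_triangle|].
  apply Rplus_le_compat_l, Cmod_sum_n_m_Cmult_le, HU.
Qed.

Lemma tannery (lam : nat -> C) (U : nat -> nat -> C) (L s : C) (M : R) :
  ex_series (fun k => Cmod (lam k)) -> is_series lam s ->
  (forall k, filterlim (U k) eventually (locally L)) ->
  (forall k N, Cmod (U k N) <= M) ->
  filterlim (fun N => sum_n (fun k => lam k * U k N)%C N) eventually (locally (L * s)%C).
Proof.
  intros Habs HS HU HM.
  assert (HM0 : 0 <= M) by (eapply Rle_trans; [apply Cmod_ge_0|apply (HM O O)]).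
  apply filterlim_C_seq. intros eps. pose proof (cond_pos eps).
  set (d := eps / (3 * (M + Cmod L + 1))).
  assert (Hd : 0 < d).
  { apply Rdiv_lt_0_compat; [lra|]. pose proof (Cmod_ge_0 L). lra. }
  assert (Hsmall : M * d + Cmod L * d < eps / 3).
  { unfold d. pose proof (Cmod_ge_0 L).
    apply (Rmult_lt_reg_r (3 * (M + Cmod L + 1))); [lra|].
    field_simplify; lra. }
  destruct (Cauchy_ex_series _ Habs (mkposreal d Hd)) as [K1 HK1].
  destruct (proj1 (filterlim_C_seq _ _) HS (mkposreal d Hd)) as [K2 HK2].
  set (K := Nat.max K1 K2).
  destruct (proj1 (filterlim_C_seq _ _) (filterlim_sum_n_Cmult lam U L K HU)
    (mkposreal (eps / 3) ltac:(lra))) as [N1 HN1].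
  exists (Nat.max N1 (S K)). intros N HN. simpl in *.
  eapply Rle_lt_trans;
    [apply (Cmod_sum_n_Cmult_sub_le lam (fun k => U k N) L s M K N); [lia|intros k; apply HM]|].
  assert (Htail : M * sum_n_m (fun k => Cmod (lam k)) (S K) N <= M * d).
  { apply Rmult_le_compat_l; [exact HM0|].
    specialize (HK1 (S K) N ltac:(lia) ltac:(lia)).
    apply Rlt_le. eapply Rle_lt_trans; [apply Rle_abs|exact HK1]. }
  assert (Hpartial : Cmod L * Cmod (sum_n lam K - s) <= Cmod L * d).
  { apply Rmult_le_compat_l; [apply Cmod_ge_0|]. apply Rlt_le, HK2. lia. }
  specialize (HN1 N ltac:(lia)). lra.
Qed.

Theorem mainTheorem1 (lam x : nat -> C) (r : R) (L : C) :
  ex_series (fun n => Cmod (lam n)) ->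
  0 < r < 1 ->
  filterlim (bin_avg r x) eventually (locally L) ->
  exists S : C, is_series lam S /\
    filterlim (bin_avg r (conv lam x)) eventually (locally (L * S)%C).
Proof.
  intros Habs Hr Hx.
  destruct (ex_series_le (K := C_AbsRing) (V := C_CompleteNormedModule) lam _
    (fun n => Rle_refl _) Habs) as [S HS].
  exists S. split; [exact HS|].
  destruct (filterlim_bounded _ (ex_intro _ L Hx)) as [M HM].
  apply (filterlim_ext (fun N => sum_n (fun k => lam k * bin_avg r (shift k x) N)%C N)).
  - intros N. symmetry. apply bin_avg_conv.
  - apply (tannery lam _ L S M Habs HS).
    + now apply bin_avg_shift_lim.
    + exact (bin_avg_shift_bound r x M Hr HM).
Qed.
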